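(* Let $r$ be a positive integer such that $r+1$ is a prime that is not a Mersenne prime. Let $N$ be a positive integer and let $q_0,q_1,\ldots,q_N$ be distinct primes with $\operatorname{ord}_{q_n}(r+1)=2^n$ for $1\le n\le N$ and $\operatorname{ord}_{q_0}(r+1)=2^N$. Let $M=\prod_{i=0}^N q_i$, and let $A$ be the set of positive integers $x$ satisfying $x+r\equiv 0\pmod{q_0}$ and $(r+1)^{2^{n-1}}x+r\equiv 0\pmod{q_n}$ for all $n\in\{1,\ldots,N\}$. Let $B=\ell_1^{\beta_1}\cdots\ell_s^{\beta_s}$, where $\ell_1,\ldots,\ell_s$ are distinct primes, each greater than $r$ and congruent to $1$ modulo $M$, and $\beta_1,\ldots,\beta_s$ are positive integers. Let $p>M$ be a prime in $A$ such that $(r+1)^{\alpha}p\in G_r$ for all nonnegative integers $\alpha$, and such that $p-r$ has a prime divisor $P$ with $P\nmid (r+1)B$. Then $(r+1)^{\alpha}Bp\in G_r$ for all nonnegative integers $\alpha$.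
   Context: For a positive integer $r$, the $r$-th Schemmel totient function $S_r:\mathbb{N}\to\mathbb{N}_0$ is the multiplicative arithmetic function (so $S_r(1)=1$ and $S_r(ab)=S_r(a)S_r(b)$ for coprime $a,b$) defined on prime powers by $S_r(p^{\alpha})=0$ if $p\le r$ and $S_r(p^\alpha)=p^{\alpha-1}(p-r)$ if $p>r$, for all primes $p$ and positive integers $\alpha$. $G_r$ denotes the set of positive integers not in the range of $S_r$. $\operatorname{ord}_q(a)$ denotes the multiplicative order of $a$ modulo the prime $q$. *)

From mathcomp Require Import all_boot.
Set Implicit Arguments. Unset Strict Implicit. Unset Printing Implicit Defensive.

Definition schemmel (r n : nat) : nat :=
  \prod_(p <- primes n) (if p <= r then 0 else p ^ (logn p n).-1 * (p - r)).

Definition in_Gr (r m : nat) : Prop :=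
  0 < m /\ forall n, 0 < n -> schemmel r n <> m.

Definition is_ord (q a k : nat) : Prop :=
  0 < k /\ a ^ k = 1 %[mod q] /\ (forall j, 0 < j < k -> a ^ j <> 1 %[mod q]).

Definition mersenne_prime (p : nat) : Prop :=
  prime p /\ exists k, p = 2 ^ k - 1.

From mathcomp Require Import all_boot.
From mathcomp Require Import zify.

(* Suppose S_r(n) = (r+1)^a B p. Then p divides a factor t^(k-1) (t - r) of
   S_r(n), where t > r is a prime factor of n, and t - r divides (r+1)^a B p.
   If t = p, the prime P dividing p - r must divide (r+1) B or p, both
   impossible. Otherwise t - r = c (r+1)^e p with c | B, hence c = 1 mod M, and
   the congruences defining A make t = c (r+1)^e p + r divisible by some q_i,
   contradicting t > p > M. *)

Set Implicit Arguments.
Unset Strict Implicit.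
Unset Printing Implicit Defensive.

Lemma eq_modnD a b a' b' d :
  a = a' %[mod d] -> b = b' %[mod d] -> a + b = a' + b' %[mod d].
Proof. by move=> Ha Hb; rewrite -modnDm Ha Hb modnDm. Qed.

Lemma eq_modnM a b a' b' d :
  a = a' %[mod d] -> b = b' %[mod d] -> a * b = a' * b' %[mod d].
Proof. by move=> Ha Hb; rewrite -modnMm Ha Hb modnMm. Qed.

Lemma expn_pow_mod1 a k h d : a ^ k = 1 %[mod d] -> a ^ (h * k) = 1 %[mod d].
Proof. by move=> Ha; rewrite mulnC expnM -modnXm Ha modnXm exp1n. Qed.

Lemma Euclid_dvd_prodP (I : eqType) (s : seq I) (f : I -> nat) p :
  prime p -> p %| \prod_(i <- s) f i -> exists2 i, i \in s & p %| f i.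
Proof. by move=> p_pr; rewrite Euclid_dvd_prod // big_has => /hasP. Qed.

Lemma prime_factors_eq1_mod M d :
  0 < d -> {in primes d, forall t, t = 1 %[mod M]} -> d = 1 %[mod M].
Proof.
move=> d_gt0 Hd; rewrite (prod_prime_decomp d_gt0) prime_decompE big_map big_seq.
apply: (big_ind (fun x => x = 1 %[mod M])) => // [x y Hx Hy|t /Hd Ht].
  by rewrite -[1]/(1 * 1); apply: eq_modnM.
by rewrite -modnXm Ht modnXm exp1n.
Qed.

Lemma two_adic_split N a : ~~ (2 ^ N %| a) ->
  exists2 v, v < N & exists h, a = 2 ^ v + h * 2 ^ v.+1.
Proof.
case: (posnP a) => [->|a_gt0]; first by rewrite dvdn0.
have [c c_odd Ea] := pfactor_coprime (isT : prime 2) a_gt0.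
rewrite coprime2n in c_odd; move=> N_ndvd.
exists (logn 2 a); last by exists c./2; rewrite {1}Ea -{1}(odd_double_half c) c_odd expnS; lia.
rewrite ltnNge; apply: contra N_ndvd => le_N.
by rewrite Ea dvdn_mull // dvdn_exp2l.
Qed.

Lemma dvdn_pfactor_split a e k B : prime a -> 0 < k -> k %| a ^ e * B ->
  exists2 c, c %| B & k = c * a ^ logn a k.
Proof.
move=> a_pr k_gt0 k_dvd; have [c a_c Ek] := pfactor_coprime a_pr k_gt0.
exists c => //; rewrite -(@Gauss_dvdr c (a ^ e)) ?coprimeXr 1?coprime_sym //.
by apply: dvdn_trans k_dvd; rewrite Ek dvdn_mulr.
Qed.

(* The 2-adic valuation [v] of [a] selects the covering prime: [q 0] if
   [v >= N], and [q v.+1] otherwise. *)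
Section Covering.

Variables (r N : nat) (q : nat -> nat) (x : nat).
Hypothesis ord_q : forall n, 1 <= n <= N -> r.+1 ^ (2 ^ n) = 1 %[mod q n].
Hypothesis ord_q0 : r.+1 ^ (2 ^ N) = 1 %[mod q 0].
Hypothesis x_q0 : x + r = 0 %[mod q 0].
Hypothesis x_q : forall n, 1 <= n <= N -> r.+1 ^ (2 ^ n.-1) * x + r = 0 %[mod q n].

Lemma covering c a : (forall i, i <= N -> c = 1 %[mod q i]) ->
  exists2 i, i <= N & q i %| c * r.+1 ^ a * x + r.
Proof.
move=> c_q; have [/dvdnP[h ->]|/two_adic_split[v ltvN [h ->]]] := boolP (2 ^ N %| a).
  exists 0 => //; apply/eqP.
  suff -> : c * r.+1 ^ (h * 2 ^ N) * x + r = 1 * 1 * x + r %[mod q 0].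
    by rewrite !mul1n x_q0 mod0n.
  apply: eq_modnD => //; apply: eq_modnM => //.
  by apply: eq_modnM; [apply: c_q | apply: expn_pow_mod1].
exists v.+1 => //; apply/eqP.
suff -> : c * r.+1 ^ (2 ^ v + h * 2 ^ v.+1) * x + r =
          1 * (r.+1 ^ 2 ^ v * 1) * x + r %[mod q v.+1].
  by rewrite mul1n muln1 (@x_q v.+1) ?mod0n //; lia.
apply: eq_modnD => //; apply: eq_modnM => //; apply: eq_modnM; first by apply: c_q; lia.
by rewrite expnD; apply: eq_modnM => //; apply: expn_pow_mod1; apply: ord_q; lia.
Qed.

Variable M : nat.
Hypothesis q_prime : forall i, i <= N -> prime (q i).
Hypothesis M_def : M = \prod_(0 <= i < N.+1) q i.

Lemma q_dvd_M i : i <= N -> q i %| M.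
Proof. by move=> le_iN; rewrite M_def (big_rem i) ?mem_index_iota ?dvdn_mulr. Qed.

Lemma M_gt0 : 0 < M.
Proof.
rewrite M_def big_seq; apply: prodn_cond_gt0 => i.
by rewrite mem_index_iota => lt_iN; apply/prime_gt0/q_prime.
Qed.

Lemma covering_composite c a : M < x -> 0 < c -> c = 1 %[mod M] ->
  ~~ prime (c * r.+1 ^ a * x + r).
Proof.
move=> lt_Mx c_gt0 c1; apply/negP => t_pr.
have [|i le_iN] := @covering c a.
  by move=> i /q_dvd_M q_M; rewrite -(modn_dvdm c q_M) c1 modn_dvdm.
rewrite dvdn_prime2 ?q_prime // => /eqP Et.
have := dvdn_leq M_gt0 (q_dvd_M le_iN); rewrite Et => le_M.
have le_x : x <= c * r.+1 ^ a * x by rewrite leq_pmull // muln_gt0 c_gt0 expn_gt0.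
by rewrite ltnNge (leq_trans le_x (leq_trans (leq_addr r _) le_M)) in lt_Mx.
Qed.

Lemma covering_sub_ndvd B t e : prime r.+1 ->
  (forall l, prime l -> l %| B -> l = 1 %[mod M]) -> M < x ->
  prime t -> r < t -> x %| t - r -> ~~ (t - r %| r.+1 ^ e * B * x).
Proof.
move=> r1_pr B_M lt_Mx t_pr lt_rt /dvdnP[k Ek]; apply/negP.
have x_gt0 : 0 < x by apply: leq_ltn_trans lt_Mx.
rewrite Ek dvdn_pmul2r // => k_dvd.
have k_gt0 : 0 < k.
  by rewrite lt0n; apply: contraTneq lt_rt => k0; rewrite -leqNgt -subn_eq0 Ek k0.
have [c c_B Ek'] := dvdn_pfactor_split r1_pr k_gt0 k_dvd.
have c_gt0 : 0 < c by move: k_gt0; rewrite Ek' muln_gt0 => /andP[].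
have c_M : c = 1 %[mod M].
  apply: prime_factors_eq1_mod => // l; rewrite mem_primes => /and3P[l_pr _ l_c].
  exact/B_M/(dvdn_trans l_c c_B).
apply/negP: (@covering_composite c (logn r.+1 k) lt_Mx c_gt0 c_M).
by rewrite -Ek' -Ek (subnK (ltnW lt_rt)) negbK.
Qed.

End Covering.

Lemma prime_sub_ndvd a B p d e P : prime p -> prime P -> P %| d -> 0 < d < p ->
  ~~ (P %| a * B) -> ~~ (d %| a ^ e * B * p).
Proof.
move=> p_pr P_pr P_d /andP[d_gt0 lt_dp] P_aB; apply/negP => /(dvdn_trans P_d).
rewrite !Euclid_dvdM // Euclid_dvdX // (dvdn_prime2 P_pr p_pr).
case/orP=> [/orP[/andP[P_a _]|P_B]|/eqP P_p].
- by rewrite Euclid_dvdM // P_a in P_aB.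
- by rewrite Euclid_dvdM // P_B orbT in P_aB.
- by move: (dvdn_leq d_gt0 P_d); rewrite P_p leqNgt lt_dp.
Qed.

Lemma schemmel_primes r n t : 0 < schemmel r n -> t \in primes n ->
  r < t /\ t - r %| schemmel r n.
Proof.
rewrite /schemmel => S_gt0 t_n; move: S_gt0; rewrite (big_rem t t_n) /=.
case: (leqP t r) => [_|lt_rt _]; first by rewrite mul0n.
by split; rewrite // dvdn_mulr // dvdn_mull.
Qed.

Lemma prime_dvd_schemmel r n p : prime p -> p %| schemmel r n ->
  exists2 t, t \in primes n & (p == t) || (p %| t - r).
Proof.
move=> p_pr /(Euclid_dvd_prodP p_pr)[t t_n p_t]; exists t => //.
have t_pr : prime t by move: t_n; rewrite mem_primes => /andP[].
move: p_t; case: (leqP t r) => [le_tr _|_]; first by rewrite (eqP le_tr) dvdn0 orbT.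
by rewrite Euclid_dvdM // Euclid_dvdX // dvdn_prime2 // => /orP[/andP[-> _]|->]; rewrite ?orbT.
Qed.

Theorem theorem2p2 (r N : nat) (q : nat -> nat) (M : nat)
  (A : nat -> Prop) (ls : seq nat) (beta : nat -> nat) (B p : nat) :
  0 < r -> prime r.+1 -> ~ mersenne_prime r.+1 ->
  0 < N ->
  (forall i, i <= N -> prime (q i)) ->
  (forall i j, i <= N -> j <= N -> q i = q j -> i = j) ->
  (forall n, 1 <= n <= N -> is_ord (q n) r.+1 (2 ^ n)) ->
  is_ord (q 0) r.+1 (2 ^ N) ->
  M = \prod_(0 <= i < N.+1) q i ->
  (forall x, A x <-> 0 < x /\ x + r = 0 %[mod q 0] /\
     (forall n, 1 <= n <= N -> r.+1 ^ (2 ^ n.-1) * x + r = 0 %[mod q n])) ->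
  uniq ls ->
  (forall l, l \in ls -> [/\ prime l, r < l & l = 1 %[mod M]]) ->
  (forall l, l \in ls -> 0 < beta l) ->
  B = \prod_(l <- ls) l ^ beta l ->
  prime p -> M < p -> A p ->
  (forall alpha, in_Gr r (r.+1 ^ alpha * p)) ->
  (exists P, [/\ prime P, P %| (p - r) + (r - p) & ~~ (P %| r.+1 * B)]) ->
  forall alpha, in_Gr r (r.+1 ^ alpha * B * p).
Proof.
(* Not needed: r + 1 non-Mersenne, N > 0, the q_i distinct, minimality of the
   orders, uniq ls, beta > 0, and (r+1)^a p in G_r. *)
move=> r_gt0 r1_pr _ _ q_pr _ ord_q ord_q0 M_def A_def _ ls_spec _ B_def p_pr lt_Mp.
case/A_def=> _ [p_q0 p_q] _ [P [P_pr P_dvd P_ndvd]] alpha.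
have B_M l : prime l -> l %| B -> l = 1 %[mod M].
  move=> l_pr; rewrite B_def => /(Euclid_dvd_prodP l_pr)[l' /ls_spec[l'_pr _ l'_M]].
  by rewrite Euclid_dvdX // dvdn_prime2 // => /andP[/eqP -> _].
have B_gt0 : 0 < B.
  rewrite B_def big_seq; apply: prodn_cond_gt0 => l /ls_spec[l_pr _ _].
  by rewrite expn_gt0 prime_gt0.
have m_gt0 : 0 < r.+1 ^ alpha * B * p by rewrite !muln_gt0 expn_gt0 B_gt0 (prime_gt0 p_pr).
split => // n _ S_n.
have S_gt0 : 0 < schemmel r n by rewrite S_n.
have p_S : p %| schemmel r n by rewrite S_n dvdn_mull.
have [t t_n /orP[/eqP p_t | p_tr]] := prime_dvd_schemmel p_pr p_S;
  have [lt_rt] := schemmel_primes S_gt0 t_n; rewrite S_n.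
- subst t; apply: (negP (prime_sub_ndvd _ p_pr P_pr _ _ P_ndvd)).
  + by move: P_dvd; rewrite (_ : r - p = 0) ?addn0 //; apply/eqP; rewrite subn_eq0 ltnW.
  + by rewrite subn_gt0 lt_rt ltn_subrL r_gt0 (prime_gt0 p_pr).
- have t_pr : prime t by move: t_n; rewrite mem_primes => /andP[].
  apply: (negP (covering_sub_ndvd (fun n hn => (ord_q n hn).2.1) ord_q0.2.1
    p_q0 p_q q_pr M_def alpha r1_pr B_M lt_Mp t_pr lt_rt p_tr)).
Qed.
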